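(* Let $k\ge 2$ and let $G=K_{n_1,n_2,\ldots,n_k}$ be the complete $k$-partite graph with part sizes $n_1,\dots,n_k$, where $n_i\ge 2$ for every $1\le i\le k$. Then $$\mathcal{R}(G)=\sum_{i=1}^k n_i\left(\frac{n_i-1}{n_i}+\sum_{\substack{t=1\\ t\neq i}}^k n_t\right)^{-1}\left(\frac{n_i-1}{2n_i}+\sum_{\substack{t=1\\ t\neq i}}^k\frac{n_t}{n_i+n_t}\right).$$
   Context: All graphs are finite, simple and connected, with at least two vertices; $d(u,v)$ denotes the shortest-path distance. $V_p$ denotes the set of all unordered pairs $(u,v)$ of distinct vertices. A vertex $x$ resolves the pair $(u,v)$ if $d(x,u)\neq d(x,v)$. For $(u,v)\in V_p$, $R(u,v)$ is the set of all vertices resolving $(u,v)$ (it always contains $u$ and $v$). The resolving share of a vertex $w$ for $(u,v)$ is $r_w(u,v)=\frac{1}{|R(u,v)|}$ if $w$ resolves $u$ and $v$, and $r_w(u,v)=0$ otherwise. For a vertex $w$, $R(w)$ is the set of pairs in $V_p$ resolved by $w$. The average resolving share of $w$ is $ar_w(G)=\frac{1}{|R(w)|}\sum_{(u,v)\in R(w)} r_w(u,v)$, and the resolving topological index of $G$ is $\mathcal{R}(G)=\sum_{w\in V(G)} ar_w(G)$. *)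

From HB Require Import structures.
From mathcomp Require Import all_boot all_order all_algebra.
Set Implicit Arguments. Unset Strict Implicit. Unset Printing Implicit Defensive.
Import Order.TTheory GRing.Theory Num.Theory.

(* A simple graph on a finite vertex type T is given by an adjacency
   relation e : rel T (assumed symmetric and irreflexive where relevant). *)
Section Resolving.
Variables (T : finType) (e : rel T).

Fixpoint walkn (n : nat) (u v : T) : bool :=
  if n is m.+1 then [exists w, e u w && walkn m w v] else u == v.

(* shortest-path distance: least n with a walk of length n (a shortest
   walk in a connected graph has length < #|T|); value #|T| if unreachable *)
Definition gdist (u v : T) : nat := find (fun n => walkn n u v) (iota 0 #|T|).

Definition Vp : {set {set T}} := [set P : {set T} | #|P| == 2].

Definition resolves (x : T) (P : {set T}) : bool :=
  [exists u in P, exists v in P, gdist x u != gdist x v].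

Definition Rpair (P : {set T}) : {set T} := [set x | resolves x P].

Definition Rvert (w : T) : {set {set T}} := [set P in Vp | resolves w P].

Local Open Scope ring_scope.

Definition rshare (w : T) (P : {set T}) : rat :=
  if resolves w P then (#|Rpair P|%:R)^-1 else 0.

Definition avg_rshare (w : T) : rat :=
  (#|Rvert w|%:R)^-1 * \sum_(P in Rvert w) rshare w P.

Definition RTI : rat := \sum_(w : T) avg_rshare w.

End Resolving.

(* complete k-partite graph K_{n_1,...,n_k}: vertex (i, j) is the j-th
   vertex of part i; two vertices are adjacent iff they lie in different parts *)
Definition kpart_vertex (k : nat) (n : 'I_k -> nat) : finType :=
  {i : 'I_k & 'I_(n i)}.

Definition kpart_adj (k : nat) (n : 'I_k -> nat) : rel (kpart_vertex n) :=
  fun x y => tag x != tag y.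
Arguments kpart_adj {k} n.

From mathcomp Require Import all_boot all_order all_algebra.
From mathcomp Require Import ring lra.
Set Implicit Arguments. Unset Strict Implicit. Unset Printing Implicit Defensive.
Import Order.TTheory GRing.Theory Num.Theory.
Local Open Scope ring_scope.

(* In K_{n_1,...,n_k} two distinct vertices are at distance 1 if they lie in
   different parts and at distance 2 otherwise.  Hence R(u,v) = {u,v} when u and
   v share a part, and R(u,v) is the union of the parts of u and v otherwise.
   A vertex w of part i resolves exactly the pairs {w,x} and the pairs with one
   vertex in part i and one outside, so |R(w)| = (n_i - 1) + n_i * sum_{t<>i} n_t,
   and the shares add up to (n_i - 1)/2 + n_i * sum_{t<>i} n_t/(n_i + n_t).
   Thus ar_w depends only on the part of w, and summing over the n_i vertices of
   each part gives the formula. *)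

Section FinSums.
Variable T : finType.

Lemma natr_card_sum (R : pzSemiRingType) (A : {pred T}) :
  #|A|%:R = \sum_(x : T) (x \in A)%:R :> R.
Proof.
rewrite -sum1_card natr_sum big_mkcond /=; apply: eq_bigr => x _.
by case: (x \in A).
Qed.

Lemma sum_offdiag (V : nmodType) (F : T -> T -> V) : (forall u, F u u = 0) ->
  \sum_(u : T) \sum_(v : T | v != u) F u v = \sum_(u : T) \sum_(v : T) F u v.
Proof.
move=> F0; apply: eq_bigr => u _.
by rewrite [in RHS](bigD1 u) //= F0 add0r.
Qed.

Lemma sum_Vp (R : numFieldType) (g : {set T} -> R) :
  \sum_(P in Vp T) g P = 2^-1 * \sum_(u : T) \sum_(v : T | v != u) g [set u; v].
Proof.
rewrite (pair_big_dep predT (fun u v => v != u) (fun u v => g [set u; v])) /=.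
rewrite (partition_big (fun p : T * T => [set p.1; p.2]) (mem (Vp T))) /=; last first.
  by move=> [u v] /= vu; rewrite inE cards2 (eq_sym u) vu.
rewrite mulr_sumr; apply: eq_bigr => P; rewrite inE => /cards2P [a [b [ab ->]]].
have fiber (p : T * T) :
    (p.2 != p.1) && ([set p.1; p.2] == [set a; b]) = (p \in [set (a, b); (b, a)]).
  case: p => u v /=; rewrite !inE; apply/idP/idP.
    case/andP=> vu /eqP uv_ab.
    have ua : u \in [set a; b] by rewrite -uv_ab set21.
    have va : v \in [set a; b] by rewrite -uv_ab set22.
    move: ua va vu; rewrite !inE.
    by case/orP=> /eqP->; case/orP=> /eqP->; rewrite ?eqxx //= ?orbT.
  case/orP=> /eqP [-> ->]; first by rewrite eq_sym ab eqxx.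
  by rewrite ab setUC eqxx.
under eq_bigl => p do rewrite fiber.
rewrite (eq_bigr (fun _ => g [set a; b])); last first.
  by move=> p /set2P [->|->] //=; rewrite setUC.
rewrite sumr_const cards2 xpair_eqE negb_and ab /=.
by rewrite -(mulr_natl (g _)) mulKf // pnatr_eq0.
Qed.

End FinSums.

Section CompleteMultipartite.
Variables (k : nat) (n : 'I_k -> nat).
Local Notation T := (kpart_vertex n).
Local Notation e := (kpart_adj n).

Lemma sum_kpart (R : pzSemiRingType) (h : 'I_k -> R) :
  \sum_(x : T) h (tag x) = \sum_(i < k) (n i)%:R * h i.
Proof.
rewrite (partition_big (fun x : T => tag x) predT) //=.
apply: eq_bigr => i _.
have := big_tag (op := +%R) (idx := 0) (T_ := fun i => 'I_(n i)) (fun _ _ => h i) i.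
rewrite sumr_const card_ord mulr_natl => ->.
by apply: eq_big => [//|x /eqP tx]; rewrite (untagE _ _ tx) tx.
Qed.

Hypothesis k_ge2 : (2 <= k)%N.
Hypothesis n_ge2 : forall i, (2 <= n i)%N.

Lemma exists_other_part (i : 'I_k) : exists j : 'I_k, j != i.
Proof.
have k_gt0 : (0 < k)%N by apply: leq_trans k_ge2.
case: (eqVneq i (Ordinal k_gt0)) => [->|i_neq0].
  by exists (Ordinal k_ge2).
by exists (Ordinal k_gt0); rewrite eq_sym.
Qed.

Lemma card_kpart_ge3 : (3 <= #|T|)%N.
Proof.
have sum_ge : (\sum_(i < k) 2 <= \sum_(i < k) #|'I_(n i)|)%N.
  by apply: leq_sum => i _; rewrite card_ord.
rewrite card_tagged sumnE big_map big_enum /=; apply: leq_trans sum_ge.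
by rewrite sum_nat_const card_ord muln2 -addnn (leq_trans _ (leq_add k_ge2 k_ge2)).
Qed.

Definition kpart_dist (u v : T) : nat :=
  if u == v then 0 else if tag u == tag v then 2 else 1.

Lemma walkn1_kpart (u v : T) : walkn e 1 u v = (tag u != tag v).
Proof.
rewrite /= /kpart_adj; apply/existsP/idP => [[w /andP[uw /eqP<-]] //|uv].
by exists v; rewrite uv eqxx.
Qed.

Lemma walkn2_same_part (u v : T) : tag u = tag v -> walkn e 2 u v.
Proof.
move=> uv; have [j ju] := exists_other_part (tag u).
have nj_gt0 : (0 < n j)%N by apply: leq_trans (n_ge2 j).
apply/existsP; exists (Tagged (fun i => 'I_(n i)) (Ordinal nj_gt0)).
apply/andP; split; first by rewrite /kpart_adj /= eq_sym.
by apply/existsP; exists v; rewrite /kpart_adj /= eqxx andbT -uv.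
Qed.

Lemma gdist_kpart (u v : T) : gdist e u v = kpart_dist u v.
Proof.
(* [gdist] only tries walk lengths below [#|T|], so lengths 0, 1, 2 must fit. *)
rewrite /gdist /kpart_dist; move: card_kpart_ge3; case: #|T| => [|[|[|N]]] //= _.
case: eqP => // _; have := walkn1_kpart u v; rewrite /= => ->.
case: (eqVneq (tag u) (tag v)) => // /walkn2_same_part.
by rewrite /= => ->.
Qed.

Lemma resolves_pair_kpart (x u v : T) :
  resolves e x [set u; v] = (kpart_dist x u != kpart_dist x v).
Proof.
apply/existsP/idP => [[a /andP[+ /existsP[b /andP[+]]]]|xuv].
  rewrite !gdist_kpart !inE.
  by case/orP=> /eqP->; case/orP=> /eqP->; rewrite ?eqxx // eq_sym.
exists u; rewrite !inE eqxx /=; apply/existsP; exists v.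
by rewrite !inE eqxx orbT !gdist_kpart.
Qed.

Lemma resolves_pair_indicator (x u v : T) : u != v ->
  (kpart_dist x u != kpart_dist x v)%:R =
  if tag u == tag v then (x == u)%:R + (x == v)%:R
  else (tag x == tag u)%:R + (tag x == tag v)%:R :> rat.
Proof.
move=> uv; rewrite /kpart_dist.
case: (eqVneq x u) => [->|xu].
  by rewrite !eqxx (negbTE uv); case: ifP => _ /=; rewrite ?addr0.
case: (eqVneq x v) => [->|xv].
  by rewrite !eqxx [tag v == _]eq_sym; case: ifP => _ /=; rewrite ?add0r.
move: xu xv uv; case: x => [ix ax]; case: u => [iu au]; case: v => [iv av] /= _ _ _.
case: (eqVneq iu iv) => [<-|iuv]; first by case: ifP.
case: (eqVneq ix iu) => [->|ixu]; first by rewrite eq_sym (negbTE iuv).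
by case: (ix == iv).
Qed.

Lemma sum_part_indicator (i : 'I_k) : \sum_(x : T) (tag x == i)%:R = (n i)%:R :> rat.
Proof.
rewrite (sum_kpart (fun t => (t == i)%:R)) (bigD1 i) //= eqxx mulr1.
rewrite big1 ?addr0 //.
by move=> t /negbTE ->; rewrite mulr0.
Qed.

Lemma card_Rpair_kpart (u v : T) : u != v ->
  #|Rpair e [set u; v]|%:R =
  if tag u == tag v then 2 else (n (tag u))%:R + (n (tag v))%:R :> rat.
Proof.
have sum_eq1 (w : T) : \sum_(x : T) (x == w)%:R = 1 :> rat.
  by rewrite (bigD1 w) //= eqxx big1 ?addr0 // => y /negbTE ->.
move=> uv; rewrite natr_card_sum.
under eq_bigr => x _ do rewrite inE resolves_pair_kpart resolves_pair_indicator //.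
by case: ifP; rewrite big_split /= ?sum_eq1 ?sum_part_indicator.
Qed.

Lemma sum_by_kpart_dist (w : T) (Phi : nat -> 'I_k -> rat) :
  \sum_(x : T) Phi (kpart_dist w x) (tag x) =
  Phi 0%N (tag w) - Phi 2%N (tag w) +
  \sum_(t < k) (n t)%:R * Phi (if t == tag w then 2 else 1)%N t.
Proof.
pose Psi (x : T) := Phi (if tag x == tag w then 2 else 1)%N (tag x).
rewrite -(sum_kpart (fun t => Phi (if t == tag w then 2 else 1)%N t)) -/Psi.
rewrite (bigD1 w) //= {1}/kpart_dist eqxx [in RHS](bigD1 w) //= /Psi eqxx.
rewrite (eq_bigr Psi) => [|x xw]; last first.
  by rewrite /kpart_dist /Psi eq_sym (negbTE xw) eq_sym.
ring.
Qed.

(* Ordered pairs grouped by the distances of their endpoints from [w]: the terms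
   are the classes {0,2}, {0,1}, {2,1} and {1,0 or 2}; [f] kills equal distances. *)
Lemma sum_pairs_by_kpart_dist (w : T) (f : nat -> nat -> 'I_k -> 'I_k -> rat) :
  (forall a s t, f a a s t = 0) ->
  let i := tag w in
  \sum_(u : T) \sum_(v : T) f (kpart_dist w u) (kpart_dist w v) (tag u) (tag v) =
  ((n i)%:R - 1) * (f 0%N 2%N i i + f 2%N 0%N i i)
  + \sum_(t < k | t != i) (n t)%:R * f 0%N 1%N i t
  + ((n i)%:R - 1) * \sum_(t < k | t != i) (n t)%:R * f 2%N 1%N i t
  + \sum_(s < k | s != i) (n s)%:R * (f 1%N 0%N s i + ((n i)%:R - 1) * f 1%N 2%N s i).
Proof.
move=> f_diag i.
under eq_bigr => u _ do
  rewrite (sum_by_kpart_dist w (fun b t => f (kpart_dist w u) b (tag u) t)).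
rewrite (sum_by_kpart_dist w (fun a s => f a 0%N s i - f a 2%N s i +
   \sum_(t < k) (n t)%:R * f a (if t == i then 2 else 1)%N s t)) /= -/i.
have split_part a s : \sum_(t < k) (n t)%:R * f a (if t == i then 2 else 1)%N s t =
   (n i)%:R * f a 2%N s i + \sum_(t < k | t != i) (n t)%:R * f a 1%N s t.
  rewrite (bigD1 i) //= eqxx; congr (_ + _).
  by apply: eq_bigr => t /negbTE ->.
rewrite !split_part !f_diag [\sum_(t < k) _](bigD1 i) //= eqxx split_part !f_diag.
rewrite [\sum_(t < k | t != i) (n t)%:R * (_ - _ + _)](eq_bigr (fun s =>
  (n s)%:R * (f 1%N 0%N s i + ((n i)%:R - 1) * f 1%N 2%N s i))); last first.
  move=> s si; rewrite (negbTE si) split_part big1 ?addr0; last first.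
    by move=> t _; rewrite f_diag mulr0.
  ring.
ring.
Qed.

Lemma card_Rvert_kpart (w : T) :
  #|Rvert e w|%:R =
  (n (tag w))%:R - 1 + (n (tag w))%:R * \sum_(t < k | t != tag w) (n t)%:R :> rat.
Proof.
have -> : #|Rvert e w|%:R = \sum_(P in Vp T) (resolves e w P)%:R :> rat.
  rewrite natr_card_sum [RHS]big_mkcond; apply: eq_bigr => P _.
  by rewrite inE; case: (P \in Vp T).
rewrite sum_Vp.
under eq_bigr => u _ do under eq_bigr => v _ do rewrite resolves_pair_kpart.
rewrite sum_offdiag => [|u]; last by rewrite eqxx.
rewrite (sum_pairs_by_kpart_dist w (f := fun a b _ _ => (a != b)%:R)) /=; last first.
  by move=> a _ _; rewrite eqxx.
under [X in _ + X + _ + _]eq_bigr => t _ do rewrite mulr1.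
under [X in _ + _ + _ * X + _]eq_bigr => t _ do rewrite mulr1.
under [X in _ + _ + _ + X]eq_bigr => t _ do rewrite mulr1.
by rewrite -mulr_suml; field.
Qed.

Lemma sum_rshare_kpart (w : T) :
  \sum_(P in Rvert e w) rshare e w P =
  ((n (tag w))%:R - 1) / 2 +
  (n (tag w))%:R * \sum_(t < k | t != tag w) (n t)%:R / ((n (tag w))%:R + (n t)%:R).
Proof.
have -> : \sum_(P in Rvert e w) rshare e w P = \sum_(P in Vp T) rshare e w P.
  rewrite big_mkcond [RHS]big_mkcond; apply: eq_bigr => P _.
  by rewrite inE /rshare; case: (P \in Vp T); case: (resolves e w P).
rewrite sum_Vp.
under eq_bigr => u _ do under eq_bigr => v vu do
  rewrite /rshare resolves_pair_kpart card_Rpair_kpart 1?(eq_sym u v) //.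
rewrite sum_offdiag => [|u]; last by rewrite eqxx.
rewrite (sum_pairs_by_kpart_dist w (f := fun a b s t =>
   if a != b then (if s == t then 2 else (n s)%:R + (n t)%:R)^-1 else 0)) /=; last first.
  by move=> a s t; rewrite eqxx.
set i := tag w; rewrite eqxx.
under [X in _ + X + _ + _]eq_bigr => t ti do rewrite eq_sym (negbTE ti).
under [X in _ + _ + _ * X + _]eq_bigr => t ti do rewrite eq_sym (negbTE ti).
rewrite [X in _ + _ + _ + X](eq_bigr (fun t =>
  (n i)%:R * ((n t)%:R / ((n i)%:R + (n t)%:R)))) => [|s si]; last first.
  by rewrite (negbTE si) (addrC (n s)%:R); ring.
by rewrite -mulr_sumr; field.
Qed.

Definition kpart_avg_share (i : 'I_k) : rat :=
  (((n i)%:R - 1) / (n i)%:R + \sum_(t < k | t != i) (n t)%:R)^-1 *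
  (((n i)%:R - 1) / (2 * (n i)%:R) +
   \sum_(t < k | t != i) (n t)%:R / ((n i)%:R + (n t)%:R)).

Lemma avg_rshare_kpart (w : T) : avg_rshare e w = kpart_avg_share (tag w).
Proof.
rewrite /avg_rshare card_Rvert_kpart sum_rshare_kpart /kpart_avg_share.
set i := tag w; set S := \sum_(t < k | t != i) _.
have ni_ge2 : 2 <= (n i)%:R :> rat by rewrite ler_nat.
have S_ge0 : 0 <= S by apply: sumr_ge0 => t _; apply: ler0n.
have ni_neq0 : (n i)%:R != 0 :> rat by rewrite lt0r_neq0 //; lra.
have card_neq0 : (n i)%:R - 1 + (n i)%:R * S != 0 by rewrite lt0r_neq0 //; nra.
by field; rewrite ni_neq0 mulrC card_neq0.
Qed.

End CompleteMultipartite.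

Theorem theorem3p10 (k : nat) (n : 'I_k -> nat)
  (hk : (2 <= k)%N) (hn : forall i, (2 <= n i)%N) :
  RTI (kpart_adj n) =
  \sum_(i < k) (n i)%:R *
     (((n i)%:R - 1) / (n i)%:R + \sum_(t < k | t != i) (n t)%:R)^-1 *
     (((n i)%:R - 1) / (2 * (n i)%:R) + \sum_(t < k | t != i) (n t)%:R / ((n i)%:R + (n t)%:R)) :> rat.
Proof.
rewrite /RTI; under eq_bigr do rewrite (avg_rshare_kpart hk hn).
by rewrite sum_kpart; apply: eq_bigr => i _; rewrite mulrA.
Qed.
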